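(* Let $G$ be a planar trivalent graph and let $M$ be a perfect matching of $G$. Then $$\langle G:M\rangle_2(1) = |G:M|_2,$$ i.e. the $2$-factor polynomial of $(G,M)$ evaluated at $z=1$ equals the number of $2$-factors of $G$ that contain every edge of $M$.
   Context: Graphs are finite and may have multiple edges; a trivalent graph is one in which every vertex has degree $3$. A $2$-factor of $G$ is a spanning subgraph in which every vertex has degree $2$. Write $[G:M]_2$ for the set of $2$-factors of $G$ containing $M$ as a subgraph, and $|G:M|_2$ for its cardinality. The $2$-factor polynomial is defined as follows. A perfect matching drawing $\Gamma$ is a collection of trivalent vertices, edges and vertex-free closed curves drawn in the $2$-sphere by a generic immersion (edges and curves may cross transversally at finitely many double points away from vertices; crossings carry no extra data), together with a set $M$ of edges forming a perfect matching of the vertices. For a matching edge $e=uv$, let $\alpha,\beta$ be the other two edge-ends at $u$ and $\gamma,\delta$ the other two edge-ends at $v$, labelled so that in a small disk around $e$ the four edge-ends appear in the cyclic order $\alpha,\beta,\delta,\gamma$. The $0$-resolution at $e$ deletes $e,u,v$ and joins $\alpha$ to $\gamma$ and $\beta$ to $\delta$ by two disjoint arcs inside the disk; the $1$-resolution instead joins $\alpha$ to $\delta$ and $\beta$ to $\gamma$ by two arcs crossing once. A state $s$ assigns $0$ or $1$ to every edge of $M$; performing the corresponding resolutions at all matching edges gives a collection of $c(s)$ immersed closed curves. The $2$-factor bracket is $$\langle \Gamma\rangle_2(z)=\sum_{s}(-z)^{|s|}(z+z^{-1})^{c(s)}\in\mathbb{Z}[z,z^{-1}],$$ where $|s|$ is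 the number of edges assigned $1$. Equivalently, $\langle\Gamma\rangle_2=\langle\Gamma_0\rangle_2-z\langle\Gamma_1\rangle_2$ for the $0$- and $1$-resolutions $\Gamma_0,\Gamma_1$ at any matching edge, each vertex-free closed curve contributes a factor $z+z^{-1}$, and the bracket is multiplicative under disjoint union. For a planar trivalent graph $G$ with perfect matching $M$, the $2$-factor polynomial $\langle G:M\rangle_2(z)$ is $\langle\Gamma\rangle_2(z)$ for any embedding $\Gamma$ of $G$ in the $2$-sphere with the edges of $M$ marked (this does not depend on the embedding). *)

(* A planar trivalent graph (multi-edges and loops allowed)
   together with a plane embedding is encoded as a combinatorial map
   (rotation system) on a finite set D of darts (half-edges):
   - alpha : fixed-point-free involution, pairing the two ends of each edge;
   - sigma : rotation permutation, its cycles are the vertices, listing the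
             edge-ends around each vertex in cyclic (counterclockwise) order;
   - faces are the cycles of alpha * sigma (i.e. x |-> sigma (alpha x)).
   The embedding is in the sphere iff Euler's formula V - E + F = 2 C holds. *)
From HB Require Import structures.
From mathcomp Require Import all_boot all_order all_fingroup all_algebra.
Set Implicit Arguments.
Unset Strict Implicit.
Unset Printing Implicit Defensive.
Import GRing.Theory.

Section Map.
Variables (D : finType) (sigma alpha : {perm D}).

Definition trivalent : Prop :=
  forall x, [/\ sigma x != x, sigma (sigma x) != x & sigma (sigma (sigma x)) = x].

Definition dart_involution : Prop :=
  forall x, alpha x != x /\ alpha (alpha x) = x.

Definition map_rel : rel D := fun x y => (y == sigma x) || (y == alpha x).

Definition planar_map : Prop :=
  #|porbits sigma| + #|porbits (alpha * sigma)%g|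
  = #|porbits alpha| + 2 * n_comp map_rel D.

(* a set of darts closed under alpha = a set of edges *)
Definition alpha_closed (S : {set D}) : bool := [forall x in S, alpha x \in S].

Definition deg_at (S : {set D}) (x : D) : nat :=
  (x \in S) + (sigma x \in S) + (sigma (sigma x) \in S).

(* M (as a set of darts) is a perfect matching: a set of edges such that each
   vertex is incident to exactly one of them (loops excluded automatically) *)
Definition perfect_matching (M : {set D}) : Prop :=
  alpha_closed M /\ forall x, deg_at M x = 1%N.

Definition two_factors_containing (M : {set D}) : {set {set D}} :=
  [set F : {set D} | [&& alpha_closed F, [forall x, deg_at F x == 2%N] & M \subset F]].

(* A state is a set S of matching darts
   closed under alpha (the matching edges assigned 1).  For a non-matching
   dart x at vertex u with matching dart m at u, and m' = alpha m at the other
   end v, the ends around the matching edge are x1 = sigma m, x2 = sigma^2 m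
   (at u) and y1 = sigma m', y2 = sigma^2 m' (at v), in cyclic order
   x1, x2, y1, y2 around a disk containing the edge, i.e.
   alpha=x1, beta=x2, delta=y1, gamma=y2.
   0-resolution: x1 -- y2, x2 -- y1 ; 1-resolution: x1 -- y1, x2 -- y2.
   conn M S x = the edge-end joined to x by the resolution arc. *)
Definition conn (M S : {set D}) (x : D) : D :=
  if sigma (sigma x) \in M then
    (* x = x1 *)
    let m := sigma (sigma x) in
    if m \in S then sigma (alpha m) else sigma (sigma (alpha m))
  else
    (* x = x2, m = sigma x *)
    let m := sigma x in
    if m \in S then sigma (sigma (alpha m)) else sigma (alpha m).

Definition curve_rel (M S : {set D}) : rel D := fun x y =>
  [&& x \notin M, y \notin M &
      [|| y == alpha x, y == conn M S x | x == conn M S y]].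

Definition ncurves (M S : {set D}) : nat :=
  n_comp (curve_rel M S) [pred x | x \notin M].

Definition state (M S : {set D}) : bool := (S \subset M) && alpha_closed S.

(* The 2-factor bracket evaluated at a nonzero z of a field:
   sum_s (-z)^|s| (z + z^-1)^c(s), |s| = number of edges assigned 1. *)
Definition two_factor_bracket (R : fieldType) (M : {set D}) (z : R) : R :=
  \sum_(S : {set D} | state M S)
     (- z) ^+ (#|S|./2) * (z + z^-1) ^+ (ncurves M S).

End Map.

From HB Require Import structures.
From mathcomp Require Import all_boot all_order all_fingroup all_algebra.
From mathcomp Require Import zify.
Set Implicit Arguments.
Unset Strict Implicit.
Unset Printing Implicit Defensive.
Import GRing.Theory Num.Theory.

(* At z = 1 the weight (z + z^-1)^c(s) = 2^c(s) of a state s counts the sets C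
   of edge-ends that are unions of curves of its resolution.  Exchanging the
   two sums, the bracket becomes a sum over C of signed counts of the states
   compatible with C.  If at some matching edge C contains both or neither of
   the two edge-ends on one side, toggling the state at that edge is a
   sign-reversing involution, so C contributes 0.  Otherwise C together with M
   is a 2-factor, exactly one state is compatible with C, and it assigns 1 to
   an even number of edges.  This parity comes from a checkerboard colouring of
   the faces of the 4-regular plane graph G/M, obtained as a section of the
   double cover of the map whose sheets are exchanged along unmatched edges.
   That cover is trivial around vertices and faces; Euler's formula for the
   map and the nonnegativity of the genus of the cover force the cover to have
   twice as many components as the map, so it splits. *)

Section Connect.
Variable T : finType.
Implicit Types (e : rel T) (x y u v : T).

Lemma connect_stable e (P : pred T) x y :
  (forall u v, e u v -> P u -> P v) -> P x -> connect e x y -> P y.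
Proof.
move=> eP Px /connectP[p ep ->]; elim: p x Px ep => //= z p IH x Px /andP[exz pz].
exact: IH (eP _ _ exz Px) pz.
Qed.

Lemma connect_homo (U : finType) (e' : rel U) (f : T -> U) e x y :
  (forall u v, e u v -> connect e' (f u) (f v)) ->
  connect e x y -> connect e' (f x) (f y).
Proof.
move=> ef; apply: (connect_stable (P := fun v => connect e' (f x) (f v))) => //.
by move=> u v /ef cuv cxu; apply: connect_trans cxu cuv.
Qed.

Lemma n_compT e : n_comp e T = #|[pred x | roots e x]|.
Proof. by apply: eq_card => x; rewrite !inE andbT. Qed.

Lemma leq_n_comp e1 e2 : connect_sym e1 -> connect_sym e2 ->
  subrel (connect e1) (connect e2) -> n_comp e2 T <= n_comp e1 T.
Proof.
move=> sym1 sym2 sub12.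
have inj : {in [pred x | roots e2 x] &, injective (fingraph.root e1)}.
  move=> u v /eqP ru /eqP rv /(fingraph.rootP sym1) /sub12 /(fingraph.rootP sym2).
  by rewrite ru rv.
rewrite !n_compT -(card_in_image inj); apply: subset_leq_card.
by apply/subsetP => _ /imageP[u _ ->]; rewrite inE roots_root.
Qed.

Definition edge_rel x y : rel T :=
  fun u v => (u == x) && (v == y) || (u == y) && (v == x).

Lemma connect_relU_edge e x y u v : connect_sym e ->
  connect (relU e (edge_rel x y)) u v ->
  connect e u v \/ (connect e u x || connect e u y) && (connect e v x || connect e v y).
Proof.
move=> sym_e cuv; pose near w := connect e w x || connect e w y.
suff: connect e u v || near u && near v by case/orP; [left | right].
apply: (connect_stable (P := fun w => connect e u w || near u && near w)) cuv;
  last by rewrite connect0.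
move=> w w' /orP[ew | /orP[] /andP[/eqP-> /eqP->]] /orP[cw | /andP[nu nw]].
- by rewrite (connect_trans cw (connect1 ew)).
- by move: nw; rewrite nu /near -!(same_connect sym_e (connect1 ew)) => ->; rewrite orbT.
- by rewrite /near cw connect0 /= !orbT.
- by rewrite nu /near connect0 !orbT.
- by rewrite /near cw connect0 /= !orbT.
- by rewrite nu /near connect0 !orbT.
Qed.

Lemma connect_sym_relU_edge e x y :
  connect_sym e -> connect_sym (relU e (edge_rel x y)).
Proof.
move=> sym_e; apply: relU_sym sym_e (sym_connect_sym _) => u v.
by rewrite /edge_rel orbC; congr (_ || _); apply: andbC.
Qed.

Lemma n_comp_relU_edge e x y : connect_sym e ->
  n_comp e T <= (n_comp (relU e (edge_rel x y)) T).+1.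
Proof.
move=> sym_e; set e' := relU e _; have sym_e' := connect_sym_relU_edge x y sym_e.
pose A := [pred r | roots e r && (r != fingraph.root e y)].
have root_x r : r \in A -> connect e r x || connect e r y -> r = fingraph.root e x.
  case/andP => /eqP rr ry /orP[] /(fingraph.rootP sym_e) rE; first by rewrite -rE.
  by rewrite -rE rr eqxx in ry.
have inj : {in A &, injective (fingraph.root e')}.
  move=> u v Au Av /(fingraph.rootP sym_e') /connect_relU_edge [//| cuv | /andP[nu nv]].
    case/andP: Au Av cuv => /eqP ru _ /andP[/eqP rv _] /(fingraph.rootP sym_e).
    by rewrite ru rv.
  by rewrite (root_x u) // (root_x v).
have leA : #|A| <= n_comp e' T.
  rewrite n_compT -(card_in_image inj); apply: subset_leq_card.
  by apply/subsetP => _ /imageP[u _ ->]; rewrite inE roots_root.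
apply: (@leq_trans #|A|.+1); last by rewrite ltnS.
rewrite n_compT (cardD1 (fingraph.root e y)) -add1n leq_add //.
  by case: (_ \in _).
by apply: subset_leq_card; apply/subsetP => r; rewrite !inE andbC.
Qed.

End Connect.

Section HypermapGenus.
Variable T : finType.
Implicit Types (s a f : {perm T}) (x y : T).

Lemma mem_porbit1 s x : s x \in porbit s x.
Proof. by have := mem_porbit s 1 x; rewrite expg1. Qed.

Lemma porbit_perm1 s x : porbit s (s x) = porbit s x.
Proof. by have := porbit_perm s 1 x; rewrite expg1. Qed.

Lemma porbit_connect (e : rel T) f x y :
  (forall z, connect e z (f z)) -> y \in porbit f x -> connect e x y.
Proof.
move=> ef /porbitP[i ->]; elim: i => [|i IH]; first by rewrite expg0 perm1.
by rewrite expgSr permM (connect_trans IH (ef _)).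
Qed.

Lemma map_rel_s s a u : map_rel s a u (s u).
Proof. by rewrite /map_rel eqxx. Qed.

Lemma map_rel_a s a u : map_rel s a u (a u).
Proof. by rewrite /map_rel eqxx orbT. Qed.

Lemma connect_sub_map_rel (e : rel T) s a :
  (forall u, connect e u (s u)) -> (forall u, connect e u (a u)) ->
  subrel (connect (map_rel s a)) (connect e).
Proof. by move=> es ea; apply: connect_sub => u _ /orP[] /eqP->. Qed.

Lemma map_rel_sym s a : connect_sym (map_rel s a).
Proof.
have back f : (forall z, map_rel s a z (f z)) ->
    forall x, connect (map_rel s a) (f x) x.
  move=> ef x; apply: (porbit_connect (f := f)) => [z|]; first exact: connect1.
  by rewrite porbit_sym mem_porbit1.
have rev x y : connect (map_rel s a) x y -> connect (map_rel s a) y x.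
  apply: (connect_stable (P := fun w => connect (map_rel s a) w x)) => //.
  move=> u v /orP[] /eqP-> cux; apply: connect_trans cux; apply: back => z;
    by rewrite /map_rel eqxx ?orbT.
by move=> x y; apply/idP/idP => /rev.
Qed.

Lemma card_porbits1 : #|porbits (1 : {perm T})| = #|T|.
Proof.
rewrite card_imset // => x y /eqP; rewrite eq_porbit_mem.
by rewrite porbit.unlock cycle1 imset_set1 /aperm perm1 inE => /eqP.
Qed.

Lemma card_porbits_le s : #|porbits s| <= #|T|.
Proof. exact: leq_imset_card. Qed.

Lemma card_porbits_le_n_comp s : #|porbits s| <= n_comp (map_rel s 1) T.
Proof.
have sym := map_rel_sym s 1.
have sub : porbits s \subset
    [set porbit s r | r in [pred x | roots (map_rel s 1) x]].
  apply/subsetP => _ /imsetP[x _ ->]; apply/imsetP.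
  exists (fingraph.root (map_rel s 1) x); first by rewrite inE roots_root.
  apply/eqP; rewrite eq_sym eq_porbit_mem.
  apply: (connect_stable (P := fun z => z \in porbit s x)) (connect_root _ x).
    move=> z w /orP[] /eqP -> zx; last by rewrite perm1.
    by rewrite -eq_porbit_mem porbit_perm1 eq_porbit_mem.
  exact: porbit_id.
by rewrite n_compT; apply: leq_trans (subset_leq_card sub) (leq_imset_card _ _).
Qed.

(* Euler's formula for the hypermap with vertices, hyperedges and faces the
   cycles of [s], [a] and [a * s]: V + E + F = #|T| + 2C - 2g with genus g. *)
Definition genus_nonneg s a : bool :=
  #|porbits s| + #|porbits (a * s)| + #|porbits a|
    <= #|T| + 2 * n_comp (map_rel s a) T.

Lemma genus_nonneg1 s : genus_nonneg s 1.
Proof.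
rewrite /genus_nonneg mul1g card_porbits1; have := card_porbits_le_n_comp s.
lia.
Qed.

Lemma genus_nonneg_tperm s a x :
  a x != x -> genus_nonneg s (tperm x (a x) * a) -> genus_nonneg s a.
Proof.
move=> ax; set y := a x; set t := tperm x y; set a' := (t * a)%g.
have a'E u : a' u = a (t u) by rewrite permM.
have aE u : a u = a' (t u) by rewrite a'E tpermK.
have faceE : (a * s = t * (a' * s))%g by rewrite !mulgA tperm2 mul1g.
have edges : #|porbits a'| = (#|porbits a|).+1.
  have := porbits_mul_tperm a x y; rewrite -/t -/a' eq_sym ax.
  by rewrite porbit_sym /y mem_porbit1 double0 addn0 addn1.
(* [t] splits the face of [a' * s] through [x] and [y] if there is one, and
   otherwise merges two faces while joining at most two components. *)
have faces := porbits_mul_tperm (a' * s) x y; rewrite /= -/t -faceE eq_sym ax in faces.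
have t_conn (e : rel T) u : connect e x y -> connect e y x -> connect e u (t u).
  by move=> cxy cyx; rewrite /t; case: tpermP => [->|->|_ _] //; rewrite connect0.
have a_conn (e : rel T) : connect e x y -> connect e y x ->
    (forall u, e u (s u)) -> (forall u, e u (a' u)) ->
    subrel (connect (map_rel s a)) (connect e).
  move=> cxy cyx es ea'; apply: connect_sub_map_rel => u; first exact: connect1.
  by rewrite aE; apply: connect_trans (t_conn _ _ cxy cyx) (connect1 (ea' _)).
have comps : n_comp (map_rel s a') T
             <= n_comp (map_rel s a) T + (x \notin porbit (a' * s) y).
  case: (boolP (x \in porbit (a' * s) y)) => xy; rewrite /= ?addn0 ?addn1.
    have cyx : connect (map_rel s a') y x.
      apply: porbit_connect xy => z; rewrite permM.
      exact: connect_trans (connect1 (map_rel_a _ _ _)) (connect1 (map_rel_s _ _ _)).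
    have cxy : connect (map_rel s a') x y by rewrite map_rel_sym.
    apply: leq_n_comp (map_rel_sym _ _) (map_rel_sym _ _) _.
    exact: a_conn cxy cyx (map_rel_s s a') (map_rel_a s a').
  apply: leq_trans (n_comp_relU_edge x y (map_rel_sym s a')) _; rewrite ltnS.
  have edge_xy u v :
      edge_rel x y u v -> connect (relU (map_rel s a') (edge_rel x y)) u v.
    by move=> uv; apply: connect1; rewrite /= uv orbT.
  apply: leq_n_comp (map_rel_sym _ _) (connect_sym_relU_edge _ _ (map_rel_sym _ _)) _.
  apply: a_conn => [||u|u] /=; rewrite ?map_rel_s ?map_rel_a //;
    by apply: edge_xy; rewrite /edge_rel !eqxx ?orbT.
rewrite /genus_nonneg; move: faces comps; rewrite edges -mul2n.
by case: (_ \notin _) => /=; lia.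
Qed.

Lemma hypermap_genus_nonneg s a : genus_nonneg s a.
Proof.
have [n] := ubnP (#|T| - #|porbits a|); elim: n a => // n IH a lt_a.
case: (pickP [pred x | a x != x]) => [x /= ax | fix_a].
  apply: (genus_nonneg_tperm ax); apply: IH.
  have := porbits_mul_tperm a x (a x); rewrite eq_sym ax porbit_sym mem_porbit1 /=.
  rewrite -mul2n muln0 addn0 addn1 => Ea'; have := card_porbits_le (tperm x (a x) * a).
  by rewrite Ea' subnS => le_P; rewrite -ltnS prednK ?subn_gt0.
have -> : a = 1%g by apply/permP => x; rewrite perm1; apply/eqP/negbFE/fix_a.
exact: genus_nonneg1.
Qed.

End HypermapGenus.

Section OrbitCounting.
Variable T : finType.
Implicit Types (s a : {perm T}).

Lemma porbit_invariant (U : Type) s (g : T -> U) x y :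
  (forall z, g (s z) = g z) -> y \in porbit s x -> g y = g x.
Proof.
move=> gs /porbitP[i ->]; elim: i => [|i IH]; first by rewrite expg0 perm1.
by rewrite expgSr permM gs.
Qed.

Lemma card_imset_invariant (U : finType) s (g : T -> U) :
  (forall z, g (s z) = g z) -> #|[set g x | x : T]| <= #|porbits s|.
Proof.
move=> gs; have -> : #|[set g x | x : T]| = #|[set [set g x] | x : T]|.
  by rewrite (imset_comp set1 g) card_imset //; apply: set1_inj.
have -> : [set [set g x] | x : T] = [set [set g z | z in O] | O : {set T} in porbits s].
  rewrite -imset_comp; apply: eq_imset => x /=; apply/setP => u.
  rewrite inE; apply/eqP/imsetP => [-> | [z xz ->]]; last exact: porbit_invariant xz.
  by exists x; rewrite ?porbit_id.
exact: leq_imset_card.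
Qed.

Lemma card_le_porbits_involution a : involutive a -> #|T| <= 2 * #|porbits a|.
Proof.
move=> aK; rewrite -[#|T|]sum1_card (partition_big_imset (porbit a)) /=.
rewrite mulnC -sum_nat_const.
apply: leq_sum => _ /imsetP[y _ ->]; rewrite sum1dep_card.
have sub : [set x | porbit a x == porbit a y] \subset [set y; a y].
  apply/subsetP => x; rewrite inE => /eqP pxy; have /porbitP[i ->] : x \in porbit a y.
    by rewrite -pxy porbit_id.
  elim: i => [|i]; first by rewrite expg0 perm1 !inE eqxx.
  by rewrite expgSr permM !inE => /orP[]/eqP->; rewrite ?aK eqxx ?orbT.
by apply: leq_trans (subset_leq_card sub) _; rewrite cards2; case: (_ != _).
Qed.

End OrbitCounting.

Section VoltageCover.
Variables (D : finType) (sg al : {perm D}) (w h : D -> bool).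
Hypotheses (al_inv : dart_involution al) (w_al : forall x, w (al x) = w x).
Hypotheses (h_sg : forall x, h (sg x) = h x (+) w x) (planar : planar_map sg al).

(* The double cover of the map with voltage [w]: the dart [(x, b)] lies on
   sheet [b], and both [sg] and [al] switch sheets at darts [x] with [w x].
   [w_al] makes the voltage vanish around faces, and the potential [h] makes
   it vanish around vertices. *)
Definition lift_perm (f : {perm D}) (z : D * bool) := (f z.1, z.2 (+) w z.1).

Lemma lift_perm_inj f : injective (lift_perm f).
Proof.
move=> [x b] [y c] [] /perm_inj <-.
by move/(congr1 (addb^~ (w x))); rewrite -!addbA addbb !addbF => ->.
Qed.

Definition cover_sg : {perm D * bool} := perm (@lift_perm_inj sg).
Definition cover_al : {perm D * bool} := perm (@lift_perm_inj al).

Lemma cover_sgE x b : cover_sg (x, b) = (sg x, b (+) w x).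
Proof. by rewrite permE. Qed.

Lemma cover_alE x b : cover_al (x, b) = (al x, b (+) w x).
Proof. by rewrite permE. Qed.

Lemma cover_faceE x b : (cover_al * cover_sg)%g (x, b) = ((al * sg)%g x, b).
Proof. by rewrite !permM cover_alE cover_sgE /= w_al -addbA addbb addbF. Qed.

Local Notation base := (map_rel sg al).
Local Notation cover := (map_rel cover_sg cover_al).

Lemma cover_porbits_sg : 2 * #|porbits sg| <= #|porbits cover_sg|.
Proof.
pose g (z : D * bool) := (porbit sg z.1, z.2 (+) h z.1).
have gE z : g (cover_sg z) = g z.
  case: z => x b; rewrite cover_sgE /g /= porbit_perm1 h_sg.
  by rewrite [h x (+) _]addbC addbA -(addbA b) addbb addbF.
apply: leq_trans (card_imset_invariant gE).
have sub : setX (porbits sg) [set: bool] \subset [set g z | z : D * bool].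
  apply/subsetP => -[O c]; rewrite inE /= in_setT andbT => /imsetP[x _ ->].
  by apply/imsetP; exists (x, c (+) h x); rewrite // /g /= -addbA addbb addbF.
by rewrite mulnC -[2]card_bool -cardsT -cardsX subset_leq_card.
Qed.

Lemma cover_porbits_face : 2 * #|porbits (al * sg)| <= #|porbits (cover_al * cover_sg)|.
Proof.
pose g (z : D * bool) := (porbit (al * sg) z.1, z.2).
have gE z : g ((cover_al * cover_sg)%g z) = g z.
  by case: z => x b; rewrite cover_faceE /g /= porbit_perm1.
apply: leq_trans (card_imset_invariant gE).
have sub : setX (porbits (al * sg)) [set: bool] \subset [set g z | z : D * bool].
  apply/subsetP => -[O c]; rewrite inE /= in_setT andbT => /imsetP[x _ ->].
  by apply/imsetP; exists (x, c).
by rewrite mulnC -[2]card_bool -cardsT -cardsX subset_leq_card.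
Qed.

Lemma cover_porbits_al : #|D| <= #|porbits cover_al|.
Proof.
have cover_alK : involutive cover_al.
  move=> [x b]; rewrite !cover_alE /= w_al -addbA addbb addbF.
  by case: (al_inv x) => _ ->.
have := card_le_porbits_involution cover_alK; rewrite card_prod card_bool.
by rewrite mulnC leq_pmul2l.
Qed.

Lemma cover_n_comp : 2 * n_comp base D <= #|[pred z | roots cover z]|.
Proof.
have := hypermap_genus_nonneg cover_sg cover_al.
have := card_le_porbits_involution (fun x => proj2 (al_inv x)).
move: planar cover_porbits_sg cover_porbits_face cover_porbits_al.
rewrite /genus_nonneg /planar_map card_prod card_bool -n_compT; lia.
Qed.

Lemma connect_cover_lift u v b :
  connect base u v -> exists c, connect cover (u, b) (v, c).
Proof.
move=> cuv; suff /existsP[c] : [exists c, connect cover (u, b) (v, c)] by exists c.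
apply: (connect_stable (P := fun y => [exists c, connect cover (u, b) (y, c)])) cuv;
  last by apply/existsP; exists b.
move=> y y' /orP[] /eqP-> /existsP[c cy]; apply/existsP; exists (c (+) w y);
  apply: connect_trans cy (connect1 _);
  by rewrite /map_rel ?cover_sgE ?cover_alE eqxx ?orbT.
Qed.

Lemma connect_cover_shift u v b c d :
  connect cover (u, b) (v, c) -> connect cover (u, b (+) d) (v, c (+) d).
Proof.
pose shift (z : D * bool) := (z.1, z.2 (+) d).
apply: (connect_homo (f := shift)) => -[x e] y /orP[] /eqP->; apply: connect1;
  by rewrite /map_rel ?cover_sgE ?cover_alE /shift /= addbAC eqxx ?orbT.
Qed.

Lemma connect_cover_proj u v b c : connect cover (u, b) (v, c) -> connect base u v.
Proof.
apply: (connect_homo (f := fst)) => -[x e] y /orP[] /eqP->; apply: connect1;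
  by rewrite /map_rel ?cover_sgE ?cover_alE /= eqxx ?orbT.
Qed.

(* The cover has at least twice as many components as the base and at most
   two over each component of the base, so every fibre splits. *)
Lemma cover_split_root r : roots base r -> ~~ connect cover (r, false) (r, true).
Proof.
move=> rr; apply/negP => joined.
have base_sym := map_rel_sym sg al; have cover_sym := map_rel_sym cover_sg cover_al.
pose q (z : D * bool) :=
  (fingraph.root base z.1, connect cover z (fingraph.root base z.1, true)).
have zq z : connect cover z (q z).
  rewrite /q; set r' := fingraph.root base z.1.
  have [[] zc] := connect_cover_lift z.2 (connect_root base z.1);
    rewrite -surjective_pairing in zc; first by rewrite zc.
  by case: (boolP (connect cover z (r', true))).
have inj : {in [pred z | roots cover z] &, injective q}.
  move=> z1 z2 /eqP r1 /eqP r2 q12; rewrite -r1 -r2; apply/(fingraph.rootP cover_sym).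
  by apply: connect_trans (zq z1) _; rewrite q12 cover_sym zq.
have sub : [set q z | z in [pred z | roots cover z]]
           \subset setX [set x | roots base x] [set: bool] :\ (r, false).
  apply/subsetP => _ /imsetP[z _ ->]; rewrite !inE /= roots_root // !andbT.
  apply/negP => /eqP qzr; have := zq z; rewrite qzr => zr.
  by case: qzr => ->; rewrite (connect_trans zr joined).
have roots_base : #|[set x | roots base x]| = n_comp base D.
  by rewrite n_compT; apply: eq_card => x; rewrite inE.
have := cardsD1 (r, false) (setX [set x | roots base x] [set: bool]).
rewrite !inE rr /= cardsX cardsT card_bool roots_base => eX.
have := subset_leq_card sub; rewrite card_in_imset // => le_sub.
by have := leq_trans cover_n_comp le_sub; rewrite mulnC eX add1n ltnn.
Qed.

Lemma cover_split x b : ~~ connect cover (x, b) (x, ~~ b).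
Proof.
have cover_sym := map_rel_sym cover_sg cover_al.
apply/negP => joined; set r := fingraph.root base x.
have [c xr] := connect_cover_lift b (connect_root base x).
have rr : connect cover (r, c) (r, ~~ c).
  apply: connect_trans (_ : connect cover (r, c) (x, b)) (connect_trans joined _).
    by rewrite cover_sym.
  by rewrite -addbT -[~~ c]addbT; apply: connect_cover_shift.
move/negP: (cover_split_root (roots_root (map_rel_sym sg al) x)); apply.
by have := connect_cover_shift c rr; rewrite addbb addNb addbb.
Qed.

Lemma connect_cover_fibre z v c d :
  connect cover z (v, c) -> connect cover z (v, d) = (c == d).
Proof.
move=> zc; have [cd | ncd] := eqVneq c d; first by rewrite -cd.
rewrite (_ : d = ~~ c); last by case: c d ncd {zc} => [] [].
apply/negP => zd; apply/negP: (cover_split v c).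
by rewrite negbK; apply: connect_trans _ zd; rewrite map_rel_sym.
Qed.

Definition sheet x := connect cover (x, false) (fingraph.root base x, false).

Lemma sheet_face x : sheet (sg (al x)) = sheet x.
Proof.
have c : connect cover (x, false) (sg (al x), false).
  apply: (@connect_trans _ _ (cover_al (x, false))); apply: connect1.
    by rewrite /map_rel eqxx orbT.
  by rewrite /map_rel cover_alE cover_sgE /= w_al addbb eqxx.
have r : fingraph.root base (sg (al x)) = fingraph.root base x.
  by apply/esym/(fingraph.rootP (map_rel_sym sg al)); apply: connect_cover_proj c.
by rewrite /sheet r (same_connect (map_rel_sym cover_sg cover_al) c).
Qed.

Lemma sheet_al x : sheet (al x) = sheet x (+) w x.
Proof.
have c : connect cover (x, false) (al x, w x).
  by apply: connect1; rewrite /map_rel cover_alE eqxx orbT.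
have r : fingraph.root base (al x) = fingraph.root base x.
  by apply/esym/(fingraph.rootP (map_rel_sym sg al)); apply: connect_cover_proj c.
have [e xe] := connect_cover_lift false (connect_root base x).
have axe : connect cover (al x, false) (fingraph.root base x, e (+) w x).
  rewrite -(addbb (w x)); apply: connect_cover_shift.
  by apply: connect_trans _ xe; rewrite map_rel_sym.
rewrite /sheet r (connect_cover_fibre false xe) (connect_cover_fibre false axe).
by case: (w x); case: e {xe axe}.
Qed.

End VoltageCover.

Section ClosedSubsets.
Variables (T : finType) (e : rel T) (a : {pred T}).
Hypotheses (e_sym : symmetric e) (e_a : forall x y, e x y -> x \in a).

Definition closedb (C : {set T}) : bool :=
  [forall x, forall y, e x y ==> ((x \in C) == (y \in C))].

Lemma card_closed_subsets :
  #|[set C : {set T} | (C \subset a) && closedb C]| = 2 ^ n_comp e a.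
Proof.
have csym : connect_sym e := sym_connect_sym e_sym.
have cl_a : closed e a.
  move=> x y exy; have eyx : e y x by rewrite e_sym.
  by rewrite (e_a exy) (e_a eyx).
have root_a x : x \in a -> fingraph.root e x \in a.
  by move=> xa; rewrite -(closed_connect cl_a (connect_root e x)).
pose R := [set x in a | roots e x].
pose f (Q : {set T}) := [set x in a | fingraph.root e x \in Q].
have inj : {in powerset R &, injective f}.
  move=> Q1 Q2; rewrite !powersetE => sQ1 sQ2 fQ; apply/setP => r.
  wlog rQ1 : Q1 Q2 sQ1 sQ2 fQ / r \in Q1.
    by move=> wl; apply/idP/idP => rQ; [rewrite -(wl Q1 Q2) | rewrite -(wl Q2 Q1)].
  have /setIdP[ra /eqP rr] := subsetP sQ1 r rQ1.
  have : r \in f Q1 by rewrite inE ra rr.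
  by rewrite fQ inE rr rQ1 => /andP[_ ->].
rewrite -[n_comp e a](_ : #|R| = _); last by apply: eq_card => x; rewrite !inE andbC.
rewrite -card_powerset -(card_in_imset inj); apply: eq_card => C.
rewrite inE; apply/andP/imsetP => [[sCa /forallP clC] | [Q]].
  have clC' : closed e (mem C).
    by move=> x y exy; have /forallP/(_ y) := clC x; rewrite exy => /eqP.
  exists (C :&: R); first by rewrite powersetE subsetIr.
  apply/setP => x; rewrite !inE; apply/idP/andP => [xC | [xa]].
    have xa := subsetP sCa x xC.
    by rewrite xa -(closed_connect clC' (connect_root e x)) xC root_a // roots_root.
  by rewrite -(closed_connect clC' (connect_root e x)) => /andP[].
rewrite powersetE => sQ ->; split; first by apply/subsetP => x /setIdP[].
apply/forallP => x; apply/forallP => y; apply/implyP => exy.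
have eyx : e y x by rewrite e_sym.
by rewrite !inE (e_a exy) (e_a eyx) (fingraph.rootP csym (connect1 exy)).
Qed.

End ClosedSubsets.

Section InvolutionSums.
Variables (T : finType) (a : {perm T}).
Hypothesis a_inv : dart_involution a.

Definition first_end x := (enum_rank x < enum_rank (a x))%N.

Lemma first_end_perm x : first_end (a x) = ~~ first_end x.
Proof.
have [ax aK] := a_inv x; rewrite /first_end aK.
case: ltngtP => // /val_inj/enum_rank_inj ex.
by rewrite ex eqxx in ax.
Qed.

Lemma big_first_end (X : {set T}) (F : T -> nat) :
  (forall x, (a x \in X) = (x \in X)) ->
  \sum_(x in X) F x = \sum_(x in X | first_end x) (F x + F (a x)).
Proof.
move=> aX; rewrite big_split /= (bigID first_end) /=; congr (_ + _).
rewrite (reindex_inj (@perm_inj _ a)) /=; apply: eq_bigl => x.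
by rewrite aX first_end_perm negbK.
Qed.
End InvolutionSums.

Section RingSums.
Local Open Scope ring_scope.

Lemma natr_card_set (R : pzSemiRingType) (T : finType) (P : pred T) :
  (#|[set x | P x]|)%:R = \sum_x (P x)%:R :> R.
Proof.
by rewrite -sum1dep_card natr_sum big_mkcond /=; apply: eq_bigr => x _; case: (P x).
Qed.

Lemma sum_sign_reversing (I : finType) (R : numDomainType) (P : pred I)
    (F : I -> R) (h : I -> I) :
  involutive h -> (forall i, P (h i) = P i) -> (forall i, P i -> F (h i) = - F i) ->
  \sum_(i | P i) F i = 0.
Proof.
move=> hK Ph Fh; set S := \sum_(i | P i) F i.
have SN : S = - S.
  rewrite {1}/S (reindex_inj (inv_inj hK)) /= -sumrN.
  by apply: eq_big => i; rewrite Ph //; apply: Fh.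
by have := mulrn_eq0 S 2; rewrite mulr2n {2}SN subrr eqxx => /esym/eqP.
Qed.

End RingSums.

Section Matching.
Variables (D : finType) (sigma alpha : {perm D}) (M : {set D}).
Hypotheses (sigma3 : trivalent sigma) (alpha_inv : dart_involution alpha).
Hypothesis matching : perfect_matching sigma alpha M.

Local Notation sg := sigma.
Local Notation al := alpha.

Lemma sg3 x : sg (sg (sg x)) = x. Proof. by case: (sigma3 x). Qed.
Lemma alK : involutive al. Proof. by move=> x; case: (alpha_inv x). Qed.

Lemma mem_alM x : (al x \in M) = (x \in M).
Proof.
have alM y : y \in M -> al y \in M.
  move=> yM; case: matching => /forallP al_M _.
  by have := al_M y; rewrite yM.
by apply/idP/idP => [/alM | /alM //]; rewrite alK.
Qed.

Lemma deg_M x : (x \in M) + (sg x \in M) + (sg (sg x) \in M) = 1.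
Proof. by case: matching => _ /(_ x). Qed.

Lemma M_sg m : m \in M -> (sg m \in M) = false.
Proof. by move=> mM; have := deg_M m; rewrite mM; case: (sg m \in M). Qed.

Lemma M_sg2 m : m \in M -> (sg (sg m) \in M) = false.
Proof.
by move=> mM; have := deg_M m; rewrite mM (M_sg mM); case: (sg (sg m) \in M).
Qed.

Lemma M_sg_potential x : (sg (sg x) \in M) = (sg x \in M) (+) (x \notin M).
Proof.
by have := deg_M x; case: (x \in M); case: (sg x \in M); case: (sg (sg x) \in M).
Qed.

Lemma unmatched_sg x : x \notin M -> (sg (sg x) \in M) = ~~ (sg x \in M).
Proof. by move=> xM; rewrite M_sg_potential xM addbT. Qed.

Definition unmatched := [pred x | x \notin M].

Lemma conn_sg S m : m \in M ->
  conn sg al M S (sg m) = if m \in S then sg (al m) else sg (sg (al m)).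
Proof. by move=> mM; rewrite /conn sg3 mM. Qed.

Lemma conn_sg2 S m : m \in M ->
  conn sg al M S (sg (sg m)) = if m \in S then sg (sg (al m)) else sg (al m).
Proof. by move=> mM; rewrite /conn sg3 (M_sg mM) sg3. Qed.

Lemma unmatchedP x : x \notin M -> exists2 m, m \in M & x = sg m \/ x = sg (sg m).
Proof.
move=> xM; case sxM: (sg (sg x) \in M); first by exists (sg (sg x)); rewrite ?sg3; [|left].
by exists (sg x); [rewrite -[_ \in _]negbK -unmatched_sg ?sxM | right; rewrite sg3].
Qed.

Lemma conn_unmatched S x : x \notin M -> conn sg al M S x \notin M.
Proof.
move=> /unmatchedP[m mM [-> | ->]].
- rewrite conn_sg //; have aM : al m \in M by rewrite mem_alM.
  by case: (m \in S); rewrite ?(M_sg aM) ?(M_sg2 aM).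
- rewrite conn_sg2 //; have aM : al m \in M by rewrite mem_alM.
  by case: (m \in S); rewrite ?(M_sg aM) ?(M_sg2 aM).
Qed.

Definition edge_closed (C : {set D}) : bool :=
  [forall x in unmatched, (al x \in C) == (x \in C)].

Definition arcs_closed (s : bool) (C : {set D}) (m : D) : bool :=
  if s then ((sg m \in C) == (sg (al m) \in C))
            && ((sg (sg m) \in C) == (sg (sg (al m)) \in C))
  else ((sg m \in C) == (sg (sg (al m)) \in C))
       && ((sg (sg m) \in C) == (sg (al m) \in C)).

Definition curve_union (S C : {set D}) : bool :=
  (C \subset unmatched) && closedb (curve_rel sg al M S) C.

Lemma card_curve_unions S : #|[set C | curve_union S C]| = 2 ^ ncurves sg al M S.
Proof.
rewrite (@card_closed_subsets _ _ unmatched) // => [x y | x y /and3P[] //].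
rewrite /curve_rel andbCA; congr (_ && (_ && _)).
have -> : (y == al x) = (x == al y) by apply/eqP/eqP => ->; rewrite alK.
by case: (x == al y); case: (x == conn _ _ _ _ _); case: (y == conn _ _ _ _ _).
Qed.

Lemma closedb_curve_relE S (C : {set D}) : closedb (curve_rel sg al M S) C =
  edge_closed C && [forall x in unmatched, (conn sg al M S x \in C) == (x \in C)].
Proof.
apply/forallP/andP => [cl | [/forall_inP ecl /forall_inP ccl] x].
  have clE x y : curve_rel sg al M S x y -> (x \in C) = (y \in C).
    by move=> r; have /forallP/(_ y) := cl x; rewrite r => /eqP.
  split; apply/forall_inP => x; rewrite inE => xM; rewrite eq_sym; apply/eqP/clE.
    by rewrite /curve_rel xM mem_alM xM eqxx.
  by rewrite /curve_rel xM conn_unmatched // eqxx orbT.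
apply/forallP => y; apply/implyP => /and3P[xM yM /or3P[] /eqP->].
- by rewrite eq_sym; apply: ecl.
- by rewrite eq_sym; apply: ccl.
- exact: ccl.
Qed.

Lemma conn_closedE S (C : {set D}) :
  [forall x in unmatched, (conn sg al M S x \in C) == (x \in C)]
  = [forall m in M, arcs_closed (m \in S) C m].
Proof.
apply/forall_inP/forall_inP => [cc m mM | ac x /unmatchedP[m mM [-> | ->]]].
- have /eqP := cc (sg m) (negbT (M_sg mM)).
  have /eqP := cc (sg (sg m)) (negbT (M_sg2 mM)).
  rewrite (conn_sg _ mM) (conn_sg2 _ mM) /arcs_closed.
  by case: (m \in S) => -> ->; rewrite !eqxx.
- by rewrite conn_sg //; move: (ac m mM); rewrite /arcs_closed;
    case: (m \in S) => /andP[/eqP-> _].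
- by rewrite conn_sg2 //; move: (ac m mM); rewrite /arcs_closed;
    case: (m \in S) => /andP[_ /eqP->].
Qed.

Lemma curve_unionE S (C : {set D}) : C \subset unmatched ->
  curve_union S C = edge_closed C && [forall m in M, arcs_closed (m \in S) C m].
Proof. by move=> sC; rewrite /curve_union sC closedb_curve_relE conn_closedE. Qed.

Definition factor_part (C : {set D}) : bool :=
  [&& C \subset unmatched, edge_closed C
    & [forall m in M, (sg m \in C) != (sg (sg m) \in C)]].

Definition state_of (C : {set D}) : {set D} :=
  [set m in M | (sg m \in C) == (sg (al m) \in C)].

Lemma state_of_state C : state al M (state_of C).
Proof.
apply/andP; split; first by apply/subsetP => x /setIdP[].
by apply/forall_inP => x; rewrite /state_of !inE mem_alM alK => /andP[-> /eqP->] /=.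
Qed.

Section FactorPart.
Variable C : {set D}.
Hypothesis C_factor : factor_part C.

Lemma factor_unmatched x : x \in C -> x \notin M.
Proof. by case/and3P: C_factor => /subsetP sC _ _ /sC. Qed.

Lemma factor_al x : x \notin M -> (al x \in C) = (x \in C).
Proof. by case/and3P: C_factor => _ /forall_inP/(_ x) ecl _ /ecl/eqP. Qed.

Lemma factor_al_closed x : (al x \in C) = (x \in C).
Proof.
case: (boolP (x \in M)) => [xM | /factor_al //].
by apply/idP/idP => /factor_unmatched; rewrite ?mem_alM xM.
Qed.

Lemma factor_sg m : m \in M -> (sg m \in C) = ~~ (sg (sg m) \in C).
Proof.
case/and3P: C_factor => _ _ /forall_inP/(_ m) vC /vC.
by case: (_ \in C); case: (_ \in C).
Qed.

Lemma arcs_closed_factor s m : m \in M -> arcs_closed s C m = (s == (m \in state_of C)).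
Proof.
move=> mM; have aM : al m \in M by rewrite mem_alM.
move: (factor_sg mM) (factor_sg aM); rewrite /arcs_closed inE mM /=.
by case: (sg m \in C); case: (sg (sg m) \in C); case: (sg (al m) \in C);
  case: (sg (sg (al m)) \in C); case: s.
Qed.

Lemma curve_union_factor S : state al M S -> curve_union S C = (S == state_of C).
Proof.
case/andP => sSM _; case/and3P: (C_factor) => sC ecl _.
rewrite curve_unionE // ecl /=; apply/forall_inP/eqP => [ac | -> m mM]; last first.
  by rewrite arcs_closed_factor // eqxx.
apply/setP => x; case: (boolP (x \in M)) => xM.
  by have := ac x xM; rewrite arcs_closed_factor // => /eqP.
rewrite inE (negbTE xM); apply/negbTE; apply: contra xM; exact: (subsetP sSM).
Qed.

Definition factor_dart m := if sg (sg m) \in C then sg (sg m) else sg m.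

Lemma factor_dartE : C = factor_dart @: M.
Proof.
apply/setP => x; apply/idP/imsetP => [xC | [m mM ->]]; last first.
  by rewrite /factor_dart; case: ifP => // /negbT; rewrite -factor_sg.
have [m mM [xE | xE]] := unmatchedP (factor_unmatched xC); exists m => //;
  rewrite /factor_dart -xE.
  by have := factor_sg mM; rewrite -xE xC => /esym/negbTE->.
by rewrite xC.
Qed.

Lemma factor_dart_inj : {in M &, injective factor_dart}.
Proof.
move=> m1 m2 M1 M2; rewrite /factor_dart.
case: ifP => _; case: ifP => _ /perm_inj; try move/perm_inj; move=> // E.
- by move: M2; rewrite -E M_sg.
- by move: M1; rewrite E M_sg.
Qed.

End FactorPart.

Section Toggle.
Variables (C : {set D}) (m0 : D).
Hypotheses (m0M : m0 \in M) (m0_free : (sg m0 \in C) = (sg (sg m0) \in C)).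

Let edge0 := [set m0; al m0].

Definition toggle (S : {set D}) : {set D} := (S :\: edge0) :|: (edge0 :\: S).

Lemma in_toggle S x : (x \in toggle S) = (x \in S) (+) (x \in edge0).
Proof. by rewrite !inE; case: (x \in S); case: (x == m0); case: (x == al m0). Qed.

Lemma toggleK : involutive toggle.
Proof. by move=> S; apply/setP => x; rewrite !in_toggle -addbA addbb addbF. Qed.

Lemma edge0_al x : (al x \in edge0) = (x \in edge0).
Proof.
rewrite !inE orbC (inj_eq perm_inj); congr (_ || _).
by apply/eqP/eqP => [<- | ->]; rewrite alK.
Qed.

Lemma state_toggle S : state al M (toggle S) = state al M S.
Proof.
have st T : state al M T -> state al M (toggle T).
  case/andP => /subsetP sM /forall_inP aT; apply/andP; split.
    apply/subsetP => x; rewrite in_toggle.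
    case: (boolP (x \in edge0)) => [| _]; last by rewrite addbF => /sM.
    by rewrite !inE => /orP[] /eqP-> _; rewrite ?mem_alM.
  apply/forall_inP => x; rewrite !in_toggle edge0_al.
  case: (boolP (x \in T)) => xT; first by rewrite (aT x xT).
  suff -> : (al x \in T) = false by [].
  by apply/negP => /aT; rewrite alK (negbTE xT).
by apply/idP/idP => /st //; rewrite toggleK.
Qed.

Lemma arcs_closed_free s s' m : m \in edge0 -> arcs_closed s C m = arcs_closed s' C m.
Proof.
rewrite !inE => /orP[] /eqP->; rewrite /arcs_closed ?alK; move: m0_free;
  by case: (sg m0 \in C); case: (sg (sg m0) \in C); case: (sg (al m0) \in C);
    case: (sg (sg (al m0)) \in C); case: s; case: s'.
Qed.

Lemma curve_union_toggle S : curve_union (toggle S) C = curve_union S C.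
Proof.
case: (boolP (C \subset unmatched)) => sC; last by rewrite /curve_union (negbTE sC).
rewrite !curve_unionE //; congr (_ && _); apply: eq_forallb_in => m _.
rewrite in_toggle; case: (boolP (m \in edge0)) => [m_edge0 | _]; last by rewrite addbF.
exact: arcs_closed_free.
Qed.

Lemma card_toggle S : state al M S -> m0 \notin S -> #|toggle S| = (#|S| + 2)%N.
Proof.
case/andP => _ /forall_inP aS m0S.
have a0S : al m0 \notin S by apply: contra m0S => /aS; rewrite alK.
have -> : toggle S = S :|: edge0.
  apply/setP => x; rewrite in_toggle in_setU !inE.
  by case: eqP => [-> | _]; case: eqP => [-> | _];
    rewrite ?(negbTE m0S) ?(negbTE a0S) ?addbF ?orbF.
rewrite cardsU cards2 eq_sym (proj1 (alpha_inv m0)).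
suff -> : S :&: edge0 = set0 by rewrite cards0 subn0.
by apply/setP => x; rewrite !inE; case: eqP => [-> | _]; case: eqP => [-> | _];
  rewrite ?(negbTE m0S) ?(negbTE a0S) ?andbF.
Qed.

Local Open Scope ring_scope.

Lemma sign_toggle (R : numDomainType) S :
  state al M S -> (-1 : R) ^+ (#|toggle S|./2) = - (-1) ^+ (#|S|./2).
Proof.
wlog m0S : S / m0 \notin S => [wl st | st].
  case: (boolP (m0 \in S)) => m0S; last exact: wl m0S st.
  rewrite -{2}(toggleK S) (wl (toggle S)) ?opprK ?state_toggle //.
  by rewrite in_toggle m0S !inE eqxx.
by rewrite card_toggle // addn2 /= exprS mulN1r.
Qed.

Lemma sum_states_free (R : numDomainType) :
  \sum_(S | state al M S) (-1 : R) ^+ (#|S|./2) * (curve_union S C)%:R = 0.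
Proof.
apply: (sum_sign_reversing (h := toggle)) => [|S|S st]; first exact: toggleK.
  exact: state_toggle.
by rewrite curve_union_toggle sign_toggle // mulNr.
Qed.

End Toggle.

Lemma deg_at_sg S x : deg_at sg S (sg x) = deg_at sg S x.
Proof. by rewrite /deg_at sg3 [in LHS]addnC addnA. Qed.

Lemma deg_at_matched S x :
  (forall m, m \in M -> deg_at sg S m = 2%N) -> deg_at sg S x = 2%N.
Proof.
move=> degS; have [xM | /unmatchedP[m mM [-> | ->]]] := boolP (x \in M); first exact: degS.
  by rewrite deg_at_sg degS.
by rewrite !deg_at_sg degS.
Qed.

Lemma factor_part_two_factor C :
  factor_part C -> C :|: M \in two_factors_containing sg al M.
Proof.
move=> fC; rewrite inE subsetUr andbT; apply/andP; split.
  apply/forall_inP => x; rewrite !in_setU mem_alM => /orP[xC | ->]; last by rewrite orbT.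
  by rewrite (factor_al fC (factor_unmatched fC xC)) xC.
apply/forallP => x; apply/eqP/deg_at_matched => m mM.
rewrite /deg_at !in_setU mM (M_sg mM) (M_sg2 mM) !orbF (factor_sg fC mM) orbT.
by case: (_ \in C).
Qed.

Lemma two_factor_factor_part F :
  F \in two_factors_containing sg al M -> factor_part (F :\: M).
Proof.
rewrite inE => /and3P[/forall_inP aF /forallP degF /subsetP MF]; apply/and3P; split.
- by apply/subsetP => x /setDP[].
- apply/forall_inP => x xM; rewrite !in_setD mem_alM (negbTE xM) /=.
  by apply/eqP; apply/idP/idP => /aF; rewrite ?alK.
- apply/forall_inP => m mM; have := eqP (degF m).
  rewrite /deg_at (MF m mM) !in_setD (M_sg mM) (M_sg2 mM) /=.
  by case: (sg m \in F); case: (sg (sg m) \in F).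
Qed.

Lemma card_factor_parts :
  #|[set C | factor_part C]| = #|two_factors_containing sg al M|.
Proof.
have inj : {in [set C | factor_part C] &, injective (fun C => C :|: M)}.
  move=> C1 C2; rewrite !inE => f1 f2 /setP E; apply/setP => x.
  case: (boolP (x \in M)) => xM; last by have := E x; rewrite !in_setU (negbTE xM) !orbF.
  by apply/idP/idP => /[dup] xC; [move/(factor_unmatched f1) | move/(factor_unmatched f2)];
    rewrite xM.
rewrite -(card_in_imset inj); apply: eq_card => F.
apply/imsetP/idP => [[C] | FF]; first by rewrite inE => /factor_part_two_factor fC ->.
exists (F :\: M); first by rewrite inE two_factor_factor_part.
move: FF; rewrite inE => /and3P[_ _ /subsetP MF].
apply/setP => x; rewrite in_setU in_setD.
by case: (boolP (x \in M)) => [/MF -> | _]; rewrite ?orbT ?orbF.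
Qed.

(* [k] is a checkerboard colouring of the faces of the map with [M] contracted. *)
Section Colouring.
Variable k : D -> bool.
Hypotheses (k_face : forall x, k (sg (al x)) = k x)
           (k_al : forall x, k (al x) = k x (+) (x \notin M)).

Lemma colour_al_matched m : m \in M -> k (al m) = k m.
Proof. by move=> mM; rewrite k_al mM addbF. Qed.

Lemma colour_factor_dart C m : m \in M ->
  k (factor_dart C m) = k m (+) (sg (sg m) \in C).
Proof.
move=> mM; have k_sg : k (sg m) = k m by rewrite -[m in sg m]alK k_face colour_al_matched.
rewrite /factor_dart; case: ifP => _; rewrite ?addbT ?addbF //.
by rewrite -[sg m]alK k_face k_al k_sg (M_sg mM) addbT.
Qed.

(* The unmatched edges pair up the darts of [C] into darts of opposite colours. *)
Lemma sum_colour_factor C : factor_part C ->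
  \sum_(x in C) k x = \sum_(m in M | first_end al m) 1%N.
Proof.
move=> fC; have aC := factor_al_closed fC.
have half_card (X : {set D}) : (forall x, (al x \in X) = (x \in X)) ->
    #|X| = (2 * \sum_(x in X | first_end al x) 1)%N.
  by move=> aX; rewrite -sum1_card (big_first_end alpha_inv _ aX) big_distrr.
have <- : \sum_(x in C | first_end al x) 1 = \sum_(m in M | first_end al m) 1.
  apply/eqP; rewrite -(eqn_pmul2l (isT : (0 < 2)%N)).
  rewrite -(half_card _ aC) -(half_card _ mem_alM).
  by rewrite (factor_dartE fC) card_in_imset //; apply: factor_dart_inj.
rewrite (big_first_end alpha_inv _ aC); apply: eq_bigr => x /andP[xC _].
by rewrite k_al (factor_unmatched fC xC) addbT; case: (k x).
Qed.

(* Count the darts of [C] of colour 1 edge by edge: a matching edge in the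
   state contributes 0 or 2 of them, any other matching edge exactly 1, and
   the total is the number of matching edges. *)
Lemma state_of_factor_even C : factor_part C -> ~~ odd (#|state_of C|./2).
Proof.
move=> fC; pose c m := sg (sg m) \in C.
pose sum_edges (F : D -> nat) := \sum_(m in M | first_end al m) F m.
have colour_M : \sum_(x in C) k x
    = sum_edges (fun m => (c m != c (al m)) + 2 * ((k m (+) c m) && (k m (+) c (al m)))).
  rewrite (factor_dartE fC) big_imset /=; last exact: factor_dart_inj.
  under eq_bigr => m mM do rewrite colour_factor_dart //.
  rewrite (big_first_end alpha_inv _ mem_alM); apply: eq_bigr => m /andP[mM _].
  by rewrite colour_al_matched // /c; case: (k m); case: (_ \in C); case: (_ \in C).
have card_state : #|state_of C| = (2 * sum_edges (fun m => c m == c (al m)))%N.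
  have -> : #|state_of C| = \sum_(m in M) (c m == c (al m)).
    rewrite -sum1_card big_mkcond [RHS]big_mkcond; apply: eq_bigr => m _.
    rewrite inE; case: (boolP (m \in M)) => //= mM.
    rewrite (factor_sg fC mM) (factor_sg fC (_ : al m \in M)) ?mem_alM // /c.
    by case: (_ \in C); case: (_ \in C).
  rewrite (big_first_end alpha_inv _ mem_alM) big_distrr; apply: eq_bigr => m _.
  by rewrite alK eq_sym addnn -mul2n.
have edges : sum_edges (fun=> 1%N)
             = sum_edges (fun m => (c m != c (al m)) + (c m == c (al m))).
  by apply: eq_bigr => m _; case: (_ == _).
move: colour_M; rewrite (sum_colour_factor fC) -/(sum_edges _) edges.
rewrite /sum_edges big_split big_split -big_distrr /=.
move=> /eqP; rewrite eqn_add2l => /eqP even.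
by rewrite card_state /sum_edges even !mul2n half_double odd_double.
Qed.

Local Open Scope ring_scope.

Lemma sum_states_curve_union (R : numDomainType) C :
  \sum_(S | state al M S) (-1 : R) ^+ (#|S|./2) * (curve_union S C)%:R
  = (factor_part C)%:R.
Proof.
case: (boolP [forall m in M, (sg m \in C) != (sg (sg m) \in C)]) => vC; last first.
  have [m0 m0M /negPn/eqP m0_free] := forall_inPn vC.
  by rewrite /factor_part (negbTE vC) !andbF (sum_states_free m0M m0_free).
case fC: (factor_part C); last first.
  have ncu S : curve_union S C = false.
    apply/negP => cu; move: fC; rewrite /factor_part vC andbT.
    have sC : C \subset unmatched by case/andP: cu.
    by move: cu; rewrite curve_unionE // sC => /andP[-> _].
  by rewrite big1 // => S _; rewrite ncu mulr0.
rewrite (bigD1 (state_of C)) ?state_of_state //= big1 ?addr0 => [|S /andP[st ne]].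
  rewrite curve_union_factor ?state_of_state // eqxx mulr1 -signr_odd.
  by rewrite (negbTE (state_of_factor_even fC)).
by rewrite curve_union_factor // (negbTE ne) mulr0.
Qed.

Lemma two_factor_bracket1 (R : numFieldType) :
  two_factor_bracket sg al M (1 : R) = (#|two_factors_containing sg al M|)%:R.
Proof.
rewrite /two_factor_bracket invr1 -card_factor_parts natr_card_set.
have curves S : (1 + 1 : R) ^+ ncurves sg al M S = \sum_C (curve_union S C)%:R.
  by rewrite -natr_card_set card_curve_unions natrX.
under eq_bigr => S _ do rewrite curves mulr_sumr.
rewrite exchange_big /=; apply: eq_bigr => C _.
exact: sum_states_curve_union.
Qed.

End Colouring.

End Matching.

Local Open Scope ring_scope.

Theorem theorem1p2 (D : finType) (sigma alpha : {perm D}) (M : {set D}) :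
  trivalent sigma -> dart_involution alpha -> planar_map sigma alpha ->
  perfect_matching sigma alpha M ->
  two_factor_bracket sigma alpha M (1 : rat)
  = (#|two_factors_containing sigma alpha M|)%:R.
Proof.
move=> sigma3 alpha_inv planar matching.
have unmatched_al x : unmatched M (alpha x) = unmatched M x.
  by rewrite !inE (mem_alM alpha_inv matching).
apply: (two_factor_bracket1 sigma3 alpha_inv matching
          (k := sheet sigma alpha (unmatched M))) => x.
- exact: sheet_face unmatched_al x.
- exact: sheet_al alpha_inv unmatched_al (M_sg_potential matching) planar x.
Qed.
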